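(* For every $k\ge1$, every $1\le p\le k$, all integers $m_1,\dots,m_k$ and every $n\ge0$, $$\mathcal D_k(m_1,\dots,m_{p-1},m_p,m_{p+1},\dots,m_k;n)=\mathcal D_k(m_1,\dots,m_{p-1},-m_p,m_{p+1},\dots,m_k;n).$$
   Context: A partition is a finite nonincreasing sequence $\lambda=(\lambda_1,\dots,\lambda_r)$ of positive integers (possibly empty); $l(\lambda)=r$, $|\lambda|=\sum\lambda_i$, $\lambda_1$ the largest part. Let $k\ge1$. A $k$-marked Durfee symbol of $n$ is an array $\eta=\begin{pmatrix}\alpha^k,&\dots,&\alpha^1\\ \beta^k,&\dots,&\beta^1\end{pmatrix}_D$ consisting of an integer $D\ge0$ and $2k$ partitions $\alpha^i,\beta^i$ with $\sum_{i=1}^k(|\alpha^i|+|\beta^i|)+D^2=n$, such that: (1) $\alpha^i$ is nonempty for $1\le i<k$; (2) for $1\le i<k$ every part of $\beta^i$ is $\le\alpha^i_1$, and for $2\le i\le k$ every part of $\alpha^i$ and every part of $\beta^i$ is $\ge\alpha^{i-1}_1$; (3) all parts of $\alpha^k$ and $\beta^k$ are $\le D$. The $i$th rank is $\rho_i(\eta)=l(\alpha^i)-l(\beta^i)-1$ for $1\le i<k$ and $\rho_k(\eta)=l(\alpha^k)-l(\beta^k)$. $\mathcal D_k(m_1,\dots,m_k;n)$ is the number of $k$-marked Durfee symbols of $n$ with $\rho_i=m_i$ for all $i$. *)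

From mathcomp Require Import all_boot all_order all_algebra.
Set Implicit Arguments. Unset Strict Implicit. Unset Printing Implicit Defensive.
Import GRing.Theory Num.Theory.

Definition is_partition (l : seq nat) : bool :=
  all (fun x => 0 < x) l && sorted geq l.

Definition psize (l : seq nat) : nat := sumn l.

Definition lpart (l : seq nat) : nat := head 0 l.

Fixpoint seqs_upto (len b : nat) : seq (seq nat) :=
  match len with
  | 0 => [:: [::]]
  | len'.+1 => [:: [::]] ++ flatten [seq [seq x :: s | s <- seqs_upto len' b] | x <- iota 1 b]
  end.

Definition partitions_upto (n : nat) : seq (seq nat) :=
  [seq l <- seqs_upto n n | is_partition l & psize l <= n].

Fixpoint lists_of (k : nat) (L : seq (seq nat)) : seq (seq (seq nat)) :=
  match k with
  | 0 => [:: [::]]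
  | k'.+1 => flatten [seq [seq x :: s | s <- lists_of k' L] | x <- L]
  end.

(* A k-marked Durfee symbol is encoded as (D, al, be) where
   al = [:: alpha^1; ...; alpha^k] and be = [:: beta^1; ...; beta^k];
   index j (0-based) of al / be stands for alpha^(j+1) / beta^(j+1). *)
Definition alphaD (al : seq (seq nat)) (j : nat) := nth [::] al j.

Definition is_kDurfee (k n D : nat) (al be : seq (seq nat)) : bool :=
  [&& size al == k, size be == k,
      all is_partition al, all is_partition be,
      sumn [seq psize a | a <- al] + sumn [seq psize b | b <- be] + D ^ 2 == n,
      all (fun j => nth [::] al j != [::]) (iota 0 k.-1),
      all (fun j => all (fun x => x <= lpart (nth [::] al j)) (nth [::] be j))
          (iota 0 k.-1),
      all (fun j => all (fun x => lpart (nth [::] al j.-1) <= x) (nth [::] al j)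
                    && all (fun x => lpart (nth [::] al j.-1) <= x) (nth [::] be j))
          (iota 1 k.-1) &
      all (fun x => x <= D) (nth [::] al k.-1) && all (fun x => x <= D) (nth [::] be k.-1)].

Definition rankD (k : nat) (al be : seq (seq nat)) (j : nat) : int :=
  (size (nth [::] al j))%:Z - (size (nth [::] be j))%:Z - (j < k.-1)%:Z.

(* Every k-marked Durfee symbol of n has D <= n and all its partitions of
   size <= n, so it occurs exactly once in the enumeration below. *)
Definition Dcount (k : nat) (m : 'I_k -> int) (n : nat) : nat :=
  count (fun t : nat * seq (seq nat) * seq (seq nat) =>
           let: (D, al, be) := t in
           is_kDurfee k n D al be && [forall i : 'I_k, rankD k al be i == m i])
    (flatten [seq [seq (D, alb.1, alb.2) | alb <- [seq (al, be) | al <- lists_of k (partitions_upto n),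
                                                              be <- lists_of k (partitions_upto n)]]
             | D <- iota 0 n.+1]).

From mathcomp Require Import all_boot all_order all_algebra ring zify.
Import GRing.Theory Num.Theory.
Set Implicit Arguments. Unset Strict Implicit.

(* Fix the (0-based) index p of the rank to be negated and write
   (alpha, beta) for the p-th pair of partitions of a symbol.  The move
     (alpha, beta) |-> (beta, alpha)                           if p is the last index,
     (alpha, beta) |-> (alpha_1 :: beta, alpha minus alpha_1)  otherwise,
   applied to the p-th pair only, sends k-marked Durfee symbols of n to
   k-marked Durfee symbols of n, negates rho_p, fixes the other ranks and is an
   involution on Durfee symbols.  Hence it exchanges the symbols counted on both
   sides of the theorem. *)

Lemma leq_sumn_mem (s : seq nat) x : x \in s -> x <= sumn s.
Proof.
elim: s => //= y s IH; rewrite inE => /predU1P[->|/IH]; first exact: leq_addr.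
by move/leq_trans; apply; exact: leq_addl.
Qed.

Lemma size_le_sumn (s : seq nat) : all (fun x => 0 < x) s -> size s <= sumn s.
Proof. by elim: s => //= x s IH /andP[x_gt0 /IH]; rewrite -add1n; apply: leq_add. Qed.

Lemma sumn_map_set_nth (T : Type) (g : T -> nat) (x0 : T) s n y : n < size s ->
  sumn (map g (set_nth x0 s n y)) + g (nth x0 s n) = sumn (map g s) + g y.
Proof.
elim: s n => [|z s IH] [|n] //= n_lt.
  by rewrite [LHS]addnC addnCA [RHS]addnC.
by rewrite -addnA IH // addnA.
Qed.

Lemma all_set_nth (T : Type) (P : pred T) (x0 : T) s n y : n < size s ->
  all P s -> P y -> all P (set_nth x0 s n y).
Proof.
elim: s n => [|z s IH] [|n] //= n_lt /andP[Pz Ps] Py; first by rewrite Py.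
by rewrite Pz IH.
Qed.

Lemma mem_seqs_upto len b s :
  (s \in seqs_upto len b) = (size s <= len) && all (fun x => 0 < x <= b) s.
Proof.
elim: len s => [|len IH] [|x s] //=; rewrite inE /= ltnS.
apply/allpairsP/idP => [[[y t]] /= [y_in t_in [-> ->]]|/and3P[s_len x_le s_le]].
  by move: y_in t_in; rewrite mem_iota add1n ltnS IH => -> /andP[-> ->].
by exists (x, s); rewrite /= mem_iota add1n ltnS IH s_len s_le.
Qed.

Lemma uniq_seqs_upto len b : uniq (seqs_upto len b).
Proof.
elim: len => //= len IH; apply/andP; split.
  by apply/negP => /allpairsP[[y t]] [].
apply: allpairs_uniq => //; first exact: iota_uniq.
by move=> [x1 s1] [x2 s2] _ _ /= [-> ->].
Qed.

Lemma mem_lists_of k L s : (s \in lists_of k L) = (size s == k) && all (mem L) s.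
Proof.
elim: k s => [|k IH] [|x s] //=; first by apply/negP => /allpairsP[[y t]] [].
apply/allpairsP/idP => [[[y t]] /= [y_in t_in [-> ->]]|].
  by move: t_in; rewrite eqSS IH y_in => /andP[-> ->].
by rewrite eqSS => /and3P[s_len x_in s_in]; exists (x, s); rewrite /= IH s_len.
Qed.

Lemma uniq_lists_of k L : uniq L -> uniq (lists_of k L).
Proof.
move=> uL; elim: k => //= k IH; apply: allpairs_uniq => //.
by move=> [x1 s1] [x2 s2] _ _ /= [-> ->].
Qed.

Lemma mem_partitions_upto n l :
  is_partition l -> psize l <= n -> l \in partitions_upto n.
Proof.
move=> l_part l_le; rewrite mem_filter l_part l_le /= mem_seqs_upto.
have /andP[l_pos _] := l_part.
rewrite (leq_trans (size_le_sumn l_pos) l_le); apply/allP => x x_in.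
by rewrite (allP l_pos) //= (leq_trans (leq_sumn_mem x_in) l_le).
Qed.

Definition symbol := (nat * seq (seq nat) * seq (seq nat))%type.

Definition candidates (k n : nat) : seq symbol :=
  flatten [seq [seq (D, alb.1, alb.2)
                | alb <- [seq (al, be) | al <- lists_of k (partitions_upto n),
                                         be <- lists_of k (partitions_upto n)]]
          | D <- iota 0 n.+1].

Definition durfee_ranks (k n : nat) (m : 'I_k -> int) (t : symbol) : bool :=
  let: (D, al, be) := t in
  is_kDurfee k n D al be && [forall i : 'I_k, rankD k al be i == m i].

Lemma DcountE (k : nat) (m : 'I_k -> int) (n : nat) :
  Dcount m n = count (durfee_ranks n m) (candidates k n).
Proof. by []. Qed.

Lemma uniq_candidates k n : uniq (candidates k n).
Proof.
have uP : uniq (lists_of k (partitions_upto n)).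
  exact/uniq_lists_of/filter_uniq/uniq_seqs_upto.
apply: allpairs_uniq; first exact: iota_uniq.
  by apply: allpairs_uniq => // -[a1 b1] [a2 b2] _ _ /= [-> ->].
by move=> [D1 [a1 b1]] [D2 [a2 b2]] _ _ /= [-> -> ->].
Qed.

Lemma mem_candidates k n D al be :
  is_kDurfee k n D al be -> (D, al, be) \in candidates k n.
Proof.
case/and5P=> /eqP al_size /eqP be_size al_part be_part /andP[/eqP weight _].
have psize_le (a : seq nat) (s : seq (seq nat)) :
    a \in s -> psize a <= sumn (map psize s).
  by move=> a_in; apply/leq_sumn_mem/map_f.
apply/allpairsP; exists (D, (al, be)); split => //=.
  rewrite -[_ :: _]/(iota 0 n.+1) mem_iota ltnS -weight (leq_trans _ (leq_addl _ _)) //.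
  by case: D {weight} => // d; exact: leq_pmulr.
apply: allpairs_f; rewrite mem_lists_of ?al_size ?be_size eqxx /=; apply/allP => a a_in.
- apply: mem_partitions_upto; first exact: (allP al_part).
  by rewrite -weight -addnA (leq_trans (psize_le _ _ a_in)) ?leq_addr.
- apply: mem_partitions_upto; first exact: (allP be_part).
  rewrite -weight -addnA (leq_trans (psize_le _ _ a_in)) //.
  by rewrite (leq_trans _ (leq_addl _ _)) ?leq_addr.
Qed.

Lemma count_involution (T : eqType) (L : seq T) (P Q : pred T) (f : T -> T) :
  uniq L -> (forall x, P x -> x \in L) -> (forall x, Q x -> x \in L) ->
  (forall x, P x -> Q (f x) /\ f (f x) = x) ->
  (forall x, Q x -> P (f x) /\ f (f x) = x) -> count P L = count Q L.
Proof.
move=> uL PL QL fP fQ; rewrite -!size_filter.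
have f_inj : {in filter P L &, injective f}.
  by move=> x y; rewrite !mem_filter => /andP[Px _] /andP[Py _] fxy;
     rewrite -(fP x Px).2 fxy (fP y Py).2.
suff /perm_size <- : perm_eq (map f (filter P L)) (filter Q L) by rewrite size_map.
apply: uniq_perm => [||y]; [by rewrite map_inj_in_uniq ?filter_uniq | exact: filter_uniq |].
apply/mapP/idP => [[x]|]; rewrite mem_filter.
  by case/andP=> Px _ ->; rewrite mem_filter (fP x Px).1 QL // (fP x Px).1.
case/andP=> Qy _; exists (f y); last by rewrite (fQ y Qy).2.
by rewrite mem_filter (fQ y Qy).1 PL // (fQ y Qy).1.
Qed.

Definition flip_pair (last : bool) (a b : seq nat) : seq nat * seq nat :=
  if last then (b, a) else (lpart a :: b, behead a).

Definition movable (last : bool) (a : seq nat) : bool := last || (a != [::]).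

(* The moved pair contains the same parts, hence satisfies the same
   part-wise conditions and has the same total size. *)
Lemma flip_pair_all last a b (P : pred nat) : movable last a ->
  all P (flip_pair last a b).1 && all P (flip_pair last a b).2 = all P a && all P b.
Proof. by case: last => /=; [rewrite andbC | case: a => //= x a _; rewrite andbAC]. Qed.

Lemma flip_pair_psize last a b : movable last a ->
  psize (flip_pair last a b).1 + psize (flip_pair last a b).2 = psize a + psize b.
Proof. by case: last => /=; [rewrite addnC | case: a => //= x a _; rewrite addnAC]. Qed.

Lemma flip_pairK last a b : movable last a ->
  flip_pair last (flip_pair last a b).1 (flip_pair last a b).2 = (a, b).
Proof. by case: last => //; case: a. Qed.

Lemma flip_pair_rank last a b : movable last a ->
  ((size (flip_pair last a b).1)%:Z - (size (flip_pair last a b).2)%:Z - (~~ last)%:Z =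
   - ((size a)%:Z - (size b)%:Z - (~~ last)%:Z))%R.
Proof.
case: last => /= [_|]; first by rewrite !subr0 opprB.
by case: a => //= x a _; rewrite !intS; ring.
Qed.

Lemma is_partition_cons x s : is_partition (x :: s) =
  [&& 0 < x, is_partition s & all (fun y => y <= x) s].
Proof.
have geq_trans : transitive geq by move=> b a c le_ba le_cb; apply: leq_trans le_cb le_ba.
rewrite /is_partition /= (path_sortedE geq_trans).
by case: (0 < x) (all (geq x) s) (sorted geq s) (all _ s) => [] [] [] [].
Qed.

Lemma flip_pair_partition last a b : movable last a ->
  is_partition a -> is_partition b -> (~~ last -> all (fun x => x <= lpart a) b) ->
  is_partition (flip_pair last a b).1 && is_partition (flip_pair last a b).2.
Proof.
case: last => [_ -> -> //|]; case: a => //= x a _.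
rewrite !is_partition_cons => /and3P[x_gt0 a_part _] -> /(_ isT) b_le.
by rewrite x_gt0 b_le a_part.
Qed.

Lemma partition_behead a : is_partition a -> all (fun x => x <= lpart a) (behead a).
Proof. by case: a => //= x a; rewrite is_partition_cons => /and3P[]. Qed.

Lemma set_nth_id (T : Type) (x0 : T) s n : n < size s -> set_nth x0 s n (nth x0 s n) = s.
Proof. by elim: s n => [|x s IH] [|n] //= n_lt; rewrite IH. Qed.

Lemma nth_set_nth_same (T : Type) (x0 : T) s n y : nth x0 (set_nth x0 s n y) n = y.
Proof. by rewrite nth_set_nth /= eqxx. Qed.

Lemma set_set_nth_same (T : eqType) (x0 : T) s n y z :
  set_nth x0 (set_nth x0 s n y) n z = set_nth x0 s n z.
Proof. by rewrite set_set_nth eqxx. Qed.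

Section FlipSymbol.

Variables (k p : nat).
Hypothesis p_lt_k : p < k.

Definition flip_al (al be : seq (seq nat)) : seq (seq nat) :=
  set_nth [::] al p (flip_pair (p == k.-1) (nth [::] al p) (nth [::] be p)).1.

Definition flip_be (al be : seq (seq nat)) : seq (seq nat) :=
  set_nth [::] be p (flip_pair (p == k.-1) (nth [::] al p) (nth [::] be p)).2.

Definition flip_symbol (t : symbol) : symbol :=
  let: (D, al, be) := t in (D, flip_al al be, flip_be al be).

Lemma p_ltn_last : (p < k.-1) = (p != k.-1).
Proof. by move: p_lt_k; case: k => // k'; rewrite ltnS /= ltn_neqAle => ->; rewrite andbT. Qed.

Lemma durfee_movable n D al be :
  is_kDurfee k n D al be -> movable (p == k.-1) (nth [::] al p).
Proof.
case/and5P=> _ _ _ _ /and5P[_ nonempty _ _ _]; rewrite /movable; case: eqP => //= /eqP.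
by rewrite -p_ltn_last => p_lt; apply: (allP nonempty); rewrite mem_iota.
Qed.

Lemma lpart_flip_al al be j : j < k.-1 ->
  lpart (nth [::] (flip_al al be) j) = lpart (nth [::] al j).
Proof.
by move=> j_lt; rewrite nth_set_nth /=; case: (j =P p) => // j_p; subst j; rewrite ltn_eqF.
Qed.

Lemma flip_all_at al be j (P : pred nat) : movable (p == k.-1) (nth [::] al p) ->
  all P (nth [::] (flip_al al be) j) && all P (nth [::] (flip_be al be) j) =
  all P (nth [::] al j) && all P (nth [::] be j).
Proof.
by move=> mov; rewrite !nth_set_nth /=; case: (j =P p) => // ->; apply: flip_pair_all.
Qed.

Lemma flip_weight al be : size al = k -> size be = k ->
  movable (p == k.-1) (nth [::] al p) ->
  sumn (map psize (flip_al al be)) + sumn (map psize (flip_be al be)) =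
  sumn (map psize al) + sumn (map psize be).
Proof.
move=> al_size be_size mov.
have p_al : p < size al by rewrite al_size.
have p_be : p < size be by rewrite be_size.
set ab := flip_pair (p == k.-1) (nth [::] al p) (nth [::] be p).
have := sumn_map_set_nth psize [::] ab.1 p_al.
have := sumn_map_set_nth psize [::] ab.2 p_be.
have := flip_pair_psize (nth [::] be p) mov.
rewrite /flip_al /flip_be -/ab; lia.
Qed.

Lemma flip_durfee n D al be :
  is_kDurfee k n D al be -> is_kDurfee k n D (flip_al al be) (flip_be al be).
Proof.
move=> dur; have mov := durfee_movable dur.
case/and5P: dur => /eqP al_size /eqP be_size al_part be_part.
case/and5P=> /eqP weight nonempty bounded interlaced last_le.
have p_al : p < size al by rewrite al_size.
have p_be : p < size be by rewrite be_size.
have a_part : is_partition (nth [::] al p) by apply: (allP al_part); apply: mem_nth.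
have b_part : is_partition (nth [::] be p) by apply: (allP be_part); apply: mem_nth.
have b_le : p != k.-1 -> all (fun x => x <= lpart (nth [::] al p)) (nth [::] be p).
  by rewrite -p_ltn_last => p_lt; apply: (allP bounded); rewrite mem_iota.
have /andP[ab_part1 ab_part2] := flip_pair_partition mov a_part b_part b_le.
apply/and5P; split.
- by rewrite size_set_nth al_size (maxn_idPr p_lt_k).
- by rewrite size_set_nth be_size (maxn_idPr p_lt_k).
- exact: all_set_nth.
- exact: all_set_nth.
apply/and5P; split; first by rewrite flip_weight // weight.
- apply/allP => j; rewrite mem_iota => /andP[_ j_lt]; rewrite nth_set_nth /=.
  case: (j =P p) => [j_p|_]; first by subst j; rewrite ltn_eqF.
  by apply: (allP nonempty); rewrite mem_iota.
- apply/allP => j; rewrite mem_iota => /andP[_ j_lt]; rewrite lpart_flip_al // nth_set_nth /=.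
  case: (j =P p) => [j_p|_]; last by apply: (allP bounded); rewrite mem_iota.
  by subst j; rewrite ltn_eqF //; apply: partition_behead.
- apply/allP => j j_in; have := allP interlaced j j_in.
  have j1_lt : j.-1 < k.-1.
    by move: j_in; rewrite mem_iota add1n => /andP[j_gt0 j_lt]; rewrite -ltnS prednK.
  by rewrite lpart_flip_al // flip_all_at.
by rewrite flip_all_at.
Qed.

Lemma flip_rank al be j : movable (p == k.-1) (nth [::] al p) ->
  rankD k (flip_al al be) (flip_be al be) j =
  (if j == p then - rankD k al be j else rankD k al be j)%R.
Proof.
move=> mov; rewrite /rankD !nth_set_nth /=; case: (j =P p) => // ->.
by rewrite p_ltn_last; apply: flip_pair_rank.
Qed.

Lemma flip_symbolK D al be : p < size al -> p < size be ->
  movable (p == k.-1) (nth [::] al p) ->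
  flip_symbol (flip_symbol (D, al, be)) = (D, al, be).
Proof.
move=> p_al p_be mov.
rewrite [flip_symbol (D, al, be)]/= {1}/flip_symbol /flip_al /flip_be.
by rewrite !nth_set_nth_same (flip_pairK _ mov) !set_set_nth_same !set_nth_id.
Qed.

Lemma flip_durfee_ranks n (m m' : 'I_k -> int) :
  (forall i : 'I_k, m' i = if val i == p then (- m i)%R else m i) ->
  forall t, durfee_ranks n m t ->
  durfee_ranks n m' (flip_symbol t) /\ flip_symbol (flip_symbol t) = t.
Proof.
move=> m'E [[D al be]] /andP[dur /forallP ranks].
have mov := durfee_movable dur; have /and3P[/eqP al_size /eqP be_size _] := dur.
rewrite flip_symbolK ?al_size ?be_size //= flip_durfee //=.
by split=> //; apply/forallP => i; rewrite flip_rank // m'E (eqP (ranks i)).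
Qed.

End FlipSymbol.

Local Open Scope ring_scope.

(* p : 'I_k is the 0-based index of the flipped rank (p+1 in the paper). *)
Theorem mainTheorem10 (k : nat) (hk : (1 <= k)%N) (p : 'I_k) (m : 'I_k -> int) (n : nat) :
  Dcount m n = Dcount (fun i : 'I_k => if i == p then - m i else m i) n.
Proof.
have durfee_mem (m0 : 'I_k -> int) (t : symbol) : durfee_ranks n m0 t -> t \in candidates k n.
  by case: t => [[D al be]] /andP[dur _]; apply: mem_candidates.
rewrite !DcountE; apply: (count_involution (f := flip_symbol k p)).
- exact: uniq_candidates.
- exact: durfee_mem.
- exact: durfee_mem.
- exact: (flip_durfee_ranks (ltn_ord p)).
- apply: (flip_durfee_ranks (ltn_ord p)) => i.
  by rewrite -[val i == _]/(i == p); case: eqP; rewrite ?opprK.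
Qed.
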